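(* For every $\alpha\in\Lambda$, the $*$-representation $\pi_\alpha$ of $W$ on $H_\alpha$ is irreducible.
   Context: Fix $d\ge 2$ and complex numbers $q_{ij}$, $1\le i\ne j\le d$, with $|q_{ij}|<1$ and $q_{ij}=\overline{q_{ji}}$. Let $W$ be the universal $C^*$-algebra generated by $s_1,\dots,s_d$ subject to $s_i^*s_i=I$ and $s_i^*s_j=q_{ij}s_js_i^*$ for $i\ne j$. Let $\Lambda_m=\{1,\dots,d\}^m$ ($\Lambda_0=\{\emptyset\}$), $\Lambda^0=\bigcup_m\Lambda_m$, $\Lambda=\{1,\dots,d\}^{\mathbb N}$; $s_\alpha=s_{\alpha_1}\cdots s_{\alpha_m}$, $s_\emptyset=I$. Shifts: $\sigma(\beta_1,\beta_2,\dots)=(\beta_2,\dots)$, $\sigma_j(\beta_1,\beta_2,\dots)=(j,\beta_1,\beta_2,\dots)$. $\beta\sim\alpha$ means $\sigma^m(\beta)=\sigma^n(\alpha)$ for some $m,n\ge0$. Fock representation: $\pi_F$ on $\mathcal F$ with unit vector $\Omega$, $\pi_F(s_j)^*\Omega=0$, and $\pi_F(s_\gamma)\Omega$, $\gamma\in\Lambda^0$, spanning a dense subspace. For $\gamma,\beta\in\Lambda_m$, $q(\gamma,\beta)=\langle\pi_F(s_\gamma)^*\pi_F(s_\beta)\Omega,\Omega\rangle$; for infinite $\gamma,\beta$, $q(\gamma,\beta)=\lim_m q((\gamma_1,\dots,\gamma_m),(\beta_1,\dots,\beta_m))$. $H_\alpha$ is the Hilbert space completion of the span of formal vectors $e_\beta$,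 $\beta\sim\alpha$, with respect to the positive form $(e_\beta,e_\gamma)=q(\gamma,\beta)$. The representation $\pi_\alpha$ of $W$ on $H_\alpha$ is given by $\pi_\alpha(s_j)e_\beta=e_{\sigma_j(\beta)}$, and $\pi_\alpha(s_j)^*e_\beta=0$ if $\beta$ does not contain $j$, $\pi_\alpha(s_j)^*e_\beta=q(j,\beta)e_{\beta\setminus j}$ otherwise, where for $\beta=(\beta'j\beta'')$ with $\beta'=(\beta'_1,\dots,\beta'_r)$ not containing $j$, $q(j,\beta)=q_{j\beta'_1}\cdots q_{j\beta'_r}$ and $\beta\setminus j=(\beta'\beta'')$. *)

From HB Require Import structures.
From mathcomp Require Import all_boot all_order all_algebra.
From mathcomp Require Import reals.
From mathcomp Require Export complex.
Set Implicit Arguments. Unset Strict Implicit. Unset Printing Implicit Defensive.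
Import Order.TTheory GRing.Theory Num.Theory.
Local Open Scope ring_scope.
Local Open Scope complex_scope.

Section Defs.
Variable R : realType.
Local Notation C := (R[i]).

(* generators s_1..s_d are indexed by 'I_d (0-based);
   finite words = seq 'I_d, infinite words (elements of Lambda) = nat -> 'I_d *)
Variable d : nat.
Definition iword := nat -> 'I_d.

Definition shift_in (j : 'I_d) (b : iword) : iword :=
  fun n => if n is n'.+1 then b n' else j.

Definition tail_equiv (b a : iword) : Prop :=
  exists m n : nat, forall k, b (k + m)%N = a (k + n)%N.

Definition prefix (m : nat) (b : iword) : seq 'I_d := mkseq b m.

Variable q : 'I_d -> 'I_d -> C.

(* Action of s_j^* on s_b Omega in the Fock representation, computed with the
   relations s_j^* s_j = I, s_j^* s_k = q_jk s_k s_j^* (j<>k), s_j^* Omega = 0: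
   s_j^* s_b Omega = c * s_{b \ j} Omega  (Some (c, b\j)), or 0 (None) if j
   does not occur in b; c = q_{j b'_1} ... q_{j b'_r}. *)
Fixpoint fock_adj (j : 'I_d) (b : seq 'I_d) : option (C * seq 'I_d) :=
  match b with
  | [::] => None
  | x :: b' =>
      if x == j then Some (1, b')
      else match fock_adj j b' with
           | None => None
           | Some (c, b'') => Some (q j x * c, x :: b'')
           end
  end.

(* qfin g b = < pi_F(s_g)^* pi_F(s_b) Omega, Omega > , where s_g^* = s_{g_m}^* ... s_{g_1}^* applied right to left *)
Fixpoint qfin (g b : seq 'I_d) : C :=
  match g with
  | [::] => if b is [::] then 1 else 0
  | j :: g' =>
      match fock_adj j b with
      | None => 0
      | Some (c, b') => c * qfin g' b'
      end
  end.

Definition qinf_is (g b : iword) (z : C) : Prop :=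
  forall eps : R, 0 < eps -> exists N : nat, forall m : nat, (N <= m)%N ->
    `| qfin (prefix m g) (prefix m b) - z | < eps%:C.

End Defs.

Record hilbert (R : realType) := Hilbert {
  hsp :> lmodType R[i];
  hinner : hsp -> hsp -> R[i];
  hinner_linl : forall (a : R[i]) (x y z : hsp),
      hinner (a *: x + y) z = a * hinner x z + hinner y z;
  hinner_herm : forall x y : hsp, hinner y x = (hinner x y)^*;
  hinner_ge0 : forall x : hsp, 0 <= hinner x x;
  hinner_def : forall x : hsp, hinner x x = 0 -> x = 0;
  (* completeness w.r.t. the norm ||x|| = sqrt <x,x> (stated with squares) *)
  hcomplete : forall u : nat -> hsp,
      (forall e : R, 0 < e -> exists N : nat, forall m n : nat,
          (N <= m)%N -> (N <= n)%N -> complex.Re (hinner (u m - u n) (u m - u n)) < e) ->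
      exists l : hsp, forall e : R, 0 < e -> exists N : nat, forall n : nat,
          (N <= n)%N -> complex.Re (hinner (u n - l) (u n - l)) < e
}.

Section HilbertDefs.
Variable R : realType.
Variable H : hilbert R.

Definition hnorm2 (x : H) : R := complex.Re (hinner x x).

Definition hlinear (T : H -> H) : Prop :=
  forall (a : R[i]) (x y : H), T (a *: x + y) = a *: T x + T y.

Definition hbounded (T : H -> H) : Prop :=
  exists c : R, forall x : H, hnorm2 (T x) <= c * hnorm2 x.

Definition hconverges (u : nat -> H) (l : H) : Prop :=
  forall e : R, 0 < e -> exists N : nat, forall n : nat,
    (N <= n)%N -> hnorm2 (u n - l) < e.

Definition closed_subspace (M : H -> Prop) : Prop :=
  [/\ M 0,
      forall (a : R[i]) (x y : H), M x -> M y -> M (a *: x + y) &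
      forall (u : nat -> H) (l : H), (forall n, M (u n)) -> hconverges u l -> M l].

Definition dense_span (I : Type) (P : I -> Prop) (v : I -> H) : Prop :=
  forall (x : H) (e : R), 0 < e ->
    exists (n : nat) (c : 'I_n -> R[i]) (b : 'I_n -> I),
      (forall k, P (b k)) /\ hnorm2 (x - \sum_(k < n) c k *: v (b k)) < e.
End HilbertDefs.

(* Let M be a nonzero closed subspace of H_alpha invariant under all s_j and s_j^*, and
   pick x in M and beta ~ alpha with <x, e_beta> <> 0 (the e_beta are total).  Writing
   beta[m] for the prefix of length m of beta, the projections s_{beta[m]} s_{beta[m]}^*
   converge strongly to the projection onto C e_beta, so e_beta lies in M.  Every e_g
   with g ~ beta is obtained from e_beta by applying s_j's and s_j^*'s, hence M contains
   a total family and M = H_alpha.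

   The convergence comes down to a combinatorial fact.  On basis vectors,
   s_{beta[m]}^* e_g = c_m e_{w_m}, where each s_j^* deletes the first occurrence of j
   in the word at the cost of a factor q_{jx} for every letter x it passes.  Since
   |q_ij| <= r < 1, either infinitely many deletions happen away from the front and
   c_m -> 0, or eventually all of them happen at the front and c_m equals the finite
   Fock products whose limit is q(beta, g).  In both cases c_m -> q(beta, g), which
   makes ||s_{beta[m]}^* (e_g - q(beta, g) e_beta)||^2 = |c_m|^2 - |q(beta, g)|^2 tend to 0. *)

From Pilot Require Import Defs.
From HB Require Import structures.
From mathcomp Require Import all_boot all_order all_algebra.
From mathcomp Require Import reals complex.
From mathcomp Require Import zify ring lra.
From Stdlib Require Import Classical ClassicalEpsilon FunctionalExtensionality.
Import Order.TTheory GRing.Theory Num.Theory.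
Local Open Scope ring_scope.
Local Open Scope complex_scope.
Set Implicit Arguments. Unset Strict Implicit. Unset Printing Implicit Defensive.

Local Notation prefix := Defs.prefix.

Section ComplexModulus.
Variable R : realType.
Implicit Types (z w : R[i]) (r : R).

Definition cabs z : R := complex.Re `|z|.

Lemma cabsE z : `|z| = (cabs z)%:C.
Proof. by rewrite /cabs RRe_real // normr_real. Qed.

Lemma ltc_cabs z r : (`|z| < r%:C) = (cabs z < r).
Proof. by rewrite cabsE ltcR. Qed.

Lemma cabs_ge0 z : 0 <= cabs z.
Proof. by rewrite -ler0c -cabsE. Qed.

Lemma cabs0 : cabs 0 = 0.
Proof. by rewrite /cabs normr0. Qed.

Lemma cabs1 : cabs 1 = 1.
Proof. by rewrite /cabs normr1. Qed.

Lemma cabs_eq0 z : (cabs z == 0) = (z == 0).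
Proof.
apply/idP/idP => [/eqP h|/eqP->]; last by rewrite cabs0.
by rewrite -normr_eq0 cabsE h.
Qed.

Lemma cabsM z w : cabs (z * w) = cabs z * cabs w.
Proof. by apply: complexI; rewrite rmorphM /= -!cabsE normrM. Qed.

Lemma cabs_prod n (F : 'I_n -> R[i]) : cabs (\prod_(k < n) F k) = \prod_(k < n) cabs (F k).
Proof. by apply: (big_morph _ cabsM cabs1). Qed.

Lemma cabsD z w : cabs (z + w) <= cabs z + cabs w.
Proof. by rewrite -lecR rmorphD /= -!cabsE ler_normD. Qed.

Lemma cabsN z : cabs (- z) = cabs z.
Proof. by rewrite /cabs normrN. Qed.

Lemma cabs_distC z w : cabs (z - w) = cabs (w - z).
Proof. by rewrite -cabsN opprB. Qed.

Lemma cabs_real r : 0 <= r -> cabs r%:C = r.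
Proof. by move=> r0; apply: complexI; rewrite -cabsE ger0_norm ?ler0c. Qed.

Lemma cabs_sqr z : ((cabs z) ^+ 2)%:C = z * z^*.
Proof. by rewrite rmorphXn /= -cabsE; exact: normCK. Qed.

End ComplexModulus.

Section HilbertSpace.
Variable R : realType.
Variable H : hilbert R.
Implicit Types (x y z : H) (a : R[i]).

Lemma hinnerDl x y z : hinner (x + y) z = hinner x z + hinner y z.
Proof. by have := hinner_linl 1 x y z; rewrite scale1r mul1r. Qed.

Lemma hinner0l z : hinner 0 z = 0.
Proof. by apply: (addIr (hinner 0 z)); rewrite -hinnerDl !add0r. Qed.

Lemma hinnerZl a x z : hinner (a *: x) z = a * hinner x z.
Proof. by have := hinner_linl a x 0 z; rewrite addr0 hinner0l addr0. Qed.

Lemma hinnerNl x z : hinner (- x) z = - hinner x z.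
Proof. by rewrite -scaleN1r hinnerZl mulN1r. Qed.

Lemma hinnerBl x y z : hinner (x - y) z = hinner x z - hinner y z.
Proof. by rewrite hinnerDl hinnerNl. Qed.

Lemma hinnerC x y : hinner x y = (hinner y x)^*.
Proof. by rewrite hinner_herm. Qed.

Lemma hinner0r z : hinner z 0 = 0.
Proof. by rewrite hinnerC hinner0l conjc0. Qed.

Lemma hinnerDr x y z : hinner z (x + y) = hinner z x + hinner z y.
Proof. by rewrite hinnerC hinnerDl rmorphD /= -!hinnerC. Qed.

Lemma hinnerZr a x z : hinner z (a *: x) = a^* * hinner z x.
Proof. by rewrite hinnerC hinnerZl rmorphM /= -hinnerC. Qed.

Lemma hinnerNr x z : hinner z (- x) = - hinner z x.
Proof. by rewrite -scaleN1r hinnerZr rmorphN rmorph1 mulN1r. Qed.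

Lemma hinnerBr x y z : hinner z (x - y) = hinner z x - hinner z y.
Proof. by rewrite hinnerDr hinnerNr. Qed.

Lemma hinner_sumr x n (f : 'I_n -> H) :
  hinner x (\sum_(k < n) f k) = \sum_(k < n) hinner x (f k).
Proof. exact: (big_morph _ (fun y z => hinnerDr y z x) (hinner0r x)). Qed.

Lemma hinner_self x : hinner x x = (hnorm2 x)%:C.
Proof. by rewrite /hnorm2 RRe_real // ger0_real // hinner_ge0. Qed.

Lemma hnorm2_ge0 x : 0 <= hnorm2 x.
Proof. by rewrite -ler0c -hinner_self hinner_ge0. Qed.

Lemma hnorm2_eq0 x : hnorm2 x = 0 -> x = 0.
Proof. by move=> h; apply: hinner_def; rewrite hinner_self h. Qed.

Lemma hnorm2_0 : hnorm2 (0 : H) = 0.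
Proof. by rewrite /hnorm2 hinner0l. Qed.

Lemma hnorm2Z a x : hnorm2 (a *: x) = cabs a ^+ 2 * hnorm2 x.
Proof.
apply: complexI; rewrite -hinner_self hinnerZl hinnerZr mulrA rmorphM /=.
by rewrite cabs_sqr hinner_self (mulrC a).
Qed.

Lemma hnorm2N x : hnorm2 (- x) = hnorm2 x.
Proof. by rewrite -scaleN1r hnorm2Z cabsN cabs1 expr1n mul1r. Qed.

Lemma hnorm2_distC x y : hnorm2 (x - y) = hnorm2 (y - x).
Proof. by rewrite -hnorm2N opprB. Qed.

Lemma hnorm2_parallelogram x y :
  hnorm2 (x + y) + hnorm2 (x - y) = 2 * hnorm2 x + 2 * hnorm2 y.
Proof.
apply: complexI; rewrite rmorphD /= -!hinner_self rmorphD /= !rmorphM /=.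
rewrite -!hinner_self !hinnerDl !hinnerDr !hinnerNl !hinnerNr rmorph_nat.
ring.
Qed.

Lemma hnorm2D_le x y : hnorm2 (x + y) <= 2 * hnorm2 x + 2 * hnorm2 y.
Proof. by rewrite -hnorm2_parallelogram lerDl hnorm2_ge0. Qed.

Lemma hnorm2_small_eq0 x : (forall e : R, 0 < e -> hnorm2 x <= e) -> x = 0.
Proof.
move=> small; apply: hnorm2_eq0; apply/eqP; rewrite eq_le hnorm2_ge0 andbT.
by apply/ler_addgt0Pr => e e0; rewrite add0r small.
Qed.

Lemma cauchy_schwarz x y : cabs (hinner x y) ^+ 2 <= hnorm2 x * hnorm2 y.
Proof.
have [y0|ny0] := eqVneq (hnorm2 y) 0.
  by rewrite (hnorm2_eq0 y0) hinner0r cabs0 expr0n /= hnorm2_0 mulr0.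
have ny_gt0 : 0 < hnorm2 y by rewrite lt_def ny0 hnorm2_ge0.
set p := hinner x y; set N := hinner y y.
have N_neq0 : N != 0.
  by apply: contra ny0 => /eqP N0; apply/eqP; apply: complexI; rewrite -hinner_self.
have NJ : Num.conj N = N by rewrite [RHS]hinnerC.
have h : hinner (x - (p / N) *: y) (x - (p / N) *: y) = (hnorm2 x)%:C - p * p^* / N.
  rewrite hinnerBl !hinnerBr !hinnerZl !hinnerZr (hinnerC y x) -/p -/N -hinner_self.
  rewrite rmorphM /= fmorphV /= NJ.
  by field.
have h2 : hnorm2 (x - (p / N) *: y) = hnorm2 x - cabs p ^+ 2 / hnorm2 y.
  apply: complexI; rewrite -hinner_self h rmorphB /= rmorphM /= fmorphV /= cabs_sqr.
  by rewrite /N hinner_self.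
by have := hnorm2_ge0 (x - (p / N) *: y); rewrite h2 subr_ge0 ler_pdivrMr.
Qed.

Lemma hinner_orthogonal_eq0 x : (forall y, hinner x y = 0) -> x = 0.
Proof. by move=> h; apply: hinner_def; apply: h. Qed.

End HilbertSpace.

Section LinearMaps.
Variable R : realType.
Variable H : hilbert R.
Variable A : H -> H.
Hypothesis A_lin : hlinear A.

Lemma hlinearD x y : A (x + y) = A x + A y.
Proof. by have := A_lin 1 x y; rewrite !scale1r. Qed.

Lemma hlinear0 : A 0 = 0.
Proof. by apply: (addIr (A 0)); rewrite -hlinearD !add0r. Qed.

Lemma hlinearZ a x : A (a *: x) = a *: A x.
Proof. by have := A_lin a x 0; rewrite !addr0 hlinear0 addr0. Qed.

Lemma hlinearB x y : A (x - y) = A x - A y.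
Proof. by rewrite hlinearD -scaleN1r hlinearZ scaleN1r. Qed.

Lemma hlinear_sum n (f : 'I_n -> H) : A (\sum_(k < n) f k) = \sum_(k < n) A (f k).
Proof. exact: (big_morph _ hlinearD hlinear0). Qed.

End LinearMaps.

Section DenseSpan.
Variable R : realType.
Variable H : hilbert R.
Variables (I : Type) (P : I -> Prop) (v : I -> H).
Hypothesis v_dense : dense_span P v.

Lemma dense_span_orthogonal_eq0 x : (forall i, P i -> hinner x (v i) = 0) -> x = 0.
Proof.
move=> xv; apply: hnorm2_small_eq0 => eps e0.
have [m [c [b [Pb hz]]]] := v_dense x e0.
set z := \sum_(k < m) c k *: v (b k) in hz.
have xz : hinner x z = 0.
  by rewrite hinner_sumr; apply: big1 => k _; rewrite hinnerZr xv // mulr0.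
have := cauchy_schwarz x (x - z).
rewrite hinnerBr xz subr0 hinner_self cabs_real ?hnorm2_ge0 //.
have [->|nx0] := eqVneq (hnorm2 x) 0; first by move=> _; rewrite ltW.
have nx_gt0 : 0 < hnorm2 x by rewrite lt_def nx0 hnorm2_ge0.
by rewrite expr2 ler_pM2l // => /le_trans; apply; apply: ltW.
Qed.

Lemma dense_span_bounded_eq0 (A : H -> H) (C : R) : hlinear A ->
  (forall x, hnorm2 (A x) <= C * hnorm2 x) -> (forall i, P i -> A (v i) = 0) ->
  forall x, A x = 0.
Proof.
move=> A_lin A_bd Av x; apply: hnorm2_small_eq0 => eps e0.
have C1_gt0 : 0 < `|C| + 1 by rewrite ltr_pwDr // normr_ge0.
have [m [c [b [Pb hz]]]] := v_dense x (divr_gt0 e0 C1_gt0).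
set z := \sum_(k < m) c k *: v (b k) in hz.
have Az : A z = 0.
  by rewrite hlinear_sum //; apply: big1 => k _; rewrite hlinearZ // Av // scaler0.
have -> : A x = A (x - z) by rewrite hlinearB // Az subr0.
apply: (le_trans (A_bd _)); apply: (le_trans (y := `|C| * hnorm2 (x - z))).
  by rewrite ler_wpM2r ?hnorm2_ge0 // ler_norm.
move: (ltW hz); rewrite ler_pdivlMr // => /(le_trans _); apply.
by rewrite mulrC ler_wpM2l ?hnorm2_ge0 // lerDl.
Qed.

Lemma dense_span_closed_subspace_full (M : H -> Prop) : closed_subspace M ->
  (forall i, P i -> M (v i)) -> forall x, M x.
Proof.
case=> M0 M_lin M_closed Mv x.
have approx N : exists z, M z /\ hnorm2 (x - z) < 2 ^- N.
  have e_gt0 : 0 < (2 : R) ^- N by rewrite invr_gt0 exprn_gt0.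
  have [m [c [b [Pb hz]]]] := v_dense x e_gt0.
  exists (\sum_(k < m) c k *: v (b k)); split => //.
  by apply: (big_rec M) => // k z _ Mz; apply: M_lin => //; apply: Mv.
pose u N := proj1_sig (constructive_indefinite_description _ (approx N)).
have u_spec N : M (u N) /\ hnorm2 (x - u N) < 2 ^- N.
  exact: (proj2_sig (constructive_indefinite_description _ (approx N))).
apply: (M_closed u) => [N|e e0]; first by case: (u_spec N).
exists (Num.bound e^-1) => N hN.
rewrite hnorm2_distC; apply: (lt_trans (proj2 (u_spec N))).
exact: realalg.RealAlg.upper_nthrootVP.
Qed.

End DenseSpan.

Section Words.
Variable d : nat.
Local Notation iw := (iword d).
Implicit Types (j : 'I_d) (w a : iw).

Definition wtail w : iw := fun k => w k.+1.
Definition wdrop (n : nat) w : iw := fun k => w (n + k)%N.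
Definition wdel (p : nat) w : iw := fun k => if (k < p)%N then w k else w k.+1.

Definition woccurs j w := exists k, w k == j.
Definition is_first_pos j w p := w p = j /\ forall k, (k < p)%N -> w k != j.

(* junk value 0 when j does not occur in w *)
Definition first_pos j w : nat :=
  match excluded_middle_informative (woccurs j w) with
  | left jw => ex_minn jw | right _ => 0%N end.

Lemma first_posP j w : woccurs j w -> is_first_pos j w (first_pos j w).
Proof.
rewrite /first_pos; case: excluded_middle_informative => // jw _.
case: ex_minnP => p /eqP wp p_min; split => // k kp.
by apply/negP => /eqP wk; have := p_min k; rewrite wk eqxx leqNgt kp => /(_ isT).
Qed.

Lemma is_first_pos_inj j w p p' : is_first_pos j w p -> is_first_pos j w p' -> p = p'.
Proof.
move=> [wp before] [wp' before']; case: (ltngtP p p') => // lt_p.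
  by move: (before' _ lt_p); rewrite wp eqxx.
by move: (before _ lt_p); rewrite wp' eqxx.
Qed.

Lemma is_first_posE j w p : is_first_pos j w p -> woccurs j w /\ first_pos j w = p.
Proof.
move=> jp; have jw : woccurs j w by exists p; rewrite (proj1 jp).
by split => //; apply: is_first_pos_inj (first_posP jw) jp.
Qed.

Lemma prefixS n w : prefix n.+1 w = w 0%N :: prefix n (wtail w).
Proof. by rewrite /prefix /mkseq /= (iotaDl 1 0) -map_comp. Qed.

Lemma prefix_rcons n w : prefix n.+1 w = rcons (prefix n w) (w n).
Proof. exact: mkseqS. Qed.

Lemma drop_prefix w k n : (k < n)%N -> drop k (prefix n w) = w k :: drop k.+1 (prefix n w).
Proof. by move=> kn; rewrite (drop_nth (w 0%N)) ?size_mkseq // nth_mkseq. Qed.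

Lemma shift_in_wtail w : shift_in (w 0%N) (wtail w) = w.
Proof. by apply: functional_extensionality => -[|k]. Qed.

Lemma tail_equiv_shift_in j w a : tail_equiv w a -> tail_equiv (shift_in j w) a.
Proof. by case=> m [n wa]; exists m.+1, n => k; rewrite addnS /= wa. Qed.

Lemma tail_equiv_wdel p w a : tail_equiv w a -> tail_equiv (wdel p w) a.
Proof.
case=> m [n wa]; exists (m + p)%N, (n + p).+1 => k.
rewrite /wdel ifF; last by lia.
have -> : (k + (m + p)).+1 = ((k + p).+1 + m)%N by lia.
by rewrite wa; congr a; lia.
Qed.

Lemma tail_equiv_wdrop k w a : tail_equiv w a -> tail_equiv (wdrop k w) a.
Proof.
case=> m [n wa]; exists m, (n + k)%N => i.
by rewrite /wdrop addnA wa; congr a; lia.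
Qed.

End Words.

Section FockWords.
Variable R : realType.
Variable d : nat.
Variable q : 'I_d -> 'I_d -> R[i].
Local Notation iw := (iword d).
Implicit Types (j : 'I_d) (b g w : iw).

Definition del_coef j w := \prod_(k < first_pos j w) q j (w k).

Lemma fock_adj_prefix_first j p : forall n w, is_first_pos j w p -> (p < n)%N ->
  fock_adj q j (prefix n w) = Some (\prod_(k < p) q j (w k), prefix n.-1 (wdel p w)).
Proof.
elim: p => [|p IH] [|n] w [wp before] // lt_pn.
  rewrite prefixS /= wp eqxx big_ord0.
  by have -> : wdel 0 w = wtail w by apply: functional_extensionality.
rewrite prefixS /= ifF; last by apply/negbTE/before.
rewrite (IH n (wtail w)) //; last by split => // k kp; apply: before.
rewrite big_ord_recl; congr (Some (_, _)).
case: n lt_pn => [|n] lt_pn //; rewrite [prefix n.+1 _]prefixS.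
by have -> : wtail (wdel p.+1 w) = wdel p (wtail w) by apply: functional_extensionality.
Qed.

Lemma fock_adj_prefix_absent j n : forall w, (forall k, (k < n)%N -> w k != j) ->
  fock_adj q j (prefix n w) = None.
Proof.
elim: n => [|n IH] w absent //.
rewrite prefixS /= ifF; last by apply/negbTE/absent.
by rewrite IH // => k kn; apply: absent.
Qed.

Lemma qfin_cons j (g b : seq 'I_d) : qfin q (j :: g) b =
  if fock_adj q j b is Some (c, b') then c * qfin q g b' else 0.
Proof. by []. Qed.

Lemma qfin_prefix_diag n : forall w, qfin q (prefix n w) (prefix n w) = 1.
Proof. by elim: n => [|n IH] w //; rewrite prefixS /= eqxx mul1r IH. Qed.

(* The action of s_j^* on e_w for an infinite word w: Some (c, w') stands for c e_w'
   and None for 0. *)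
Definition wadj j w : option (R[i] * iw) :=
  match excluded_middle_informative (woccurs j w) with
  | left _ => Some (del_coef j w, wdel (first_pos j w) w)
  | right _ => None end.

Fixpoint wadj_iter b g n : option (R[i] * iw) :=
  if n is n'.+1 then
    if wadj_iter b g n' is Some (c, w) then
      if wadj (b n') w is Some (c', w') then Some (c * c', w') else None
    else None
  else Some (1, g).

Definition wadj_coef b g n := if wadj_iter b g n is Some (c, _) then c else 0.

Definition wadj_pos b g i :=
  if wadj_iter b g i is Some (_, w) then first_pos (b i) w else 0%N.

(* every letter deleted in the first k steps lies inside the window of length m *)
Definition wadj_fits b g k m := all (fun i => wadj_pos b g i < m - i)%N (iota 0 k).

Lemma wadj_fitsS b g k m :
  wadj_fits b g k.+1 m = wadj_fits b g k m && (wadj_pos b g k < m - k)%N.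
Proof. by rewrite /wadj_fits -addn1 iotaD all_cat /= andbT. Qed.

Lemma qfin_prefix_wadj_iter b g m k : (k <= m)%N ->
  qfin q (prefix m b) (prefix m g) =
  if wadj_iter b g k is Some (c, w) then
    if wadj_fits b g k m then c * qfin q (drop k (prefix m b)) (prefix (m - k) w) else 0
  else 0.
Proof.
elim: k => [|k IH] km /=; first by rewrite drop0 subn0 mul1r.
rewrite (IH (ltnW km)) wadj_fitsS /wadj_pos.
case: (wadj_iter b g k) => [[c w]|] //.
case: (wadj_fits b g k m); last by case: (wadj (b k) w) => [[c' w']|].
rewrite (drop_prefix _ km) /= /wadj.
case: excluded_middle_informative => [jw|jw].
  have [wp before] := first_posP jw.
  case: (ltnP (first_pos (b k) w) (m - k)) => hp.
    by rewrite (fock_adj_prefix_first (conj wp before) hp) -subnS mulrA.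
  rewrite fock_adj_prefix_absent ?mulr0 // => k' hk'; apply: before.
  exact: leq_trans hk' hp.
rewrite fock_adj_prefix_absent ?mulr0 // => k' _; apply/negP => /eqP wk'.
by apply: jw; exists k'; rewrite wk'.
Qed.

Lemma qfin_prefix_wadj b g m :
  qfin q (prefix m b) (prefix m g) = if wadj_fits b g m m then wadj_coef b g m else 0.
Proof.
rewrite (qfin_prefix_wadj_iter b g (leqnn m)) /wadj_coef.
case: (wadj_iter b g m) => [[c w]|]; last by case: (wadj_fits b g m m).
by rewrite drop_oversize ?size_mkseq // subnn mulr1.
Qed.

End FockWords.

Lemma nondecreasing_bounded_stationary (S : nat -> nat) K :
  (forall n, (S n <= S n.+1)%N) -> (forall n, (S n <= K)%N) ->
  exists N, forall n, (N <= n)%N -> S n = S N.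
Proof.
move=> S_mono S_bd.
have S_homo : {homo S : m n / (m <= n)%N}.
  exact: homo_leq leqnn (fun _ _ _ => @leq_trans _ _ _) S_mono.
suff: forall k N0, (K - S N0 <= k)%N -> exists N, forall n, (N <= n)%N -> S n = S N.
  by move/(_ (K - S 0%N)%N 0%N (leqnn _)).
elim=> [|k IH] N0 gap.
  by exists N0 => n hn; have := S_homo _ _ hn; have := S_bd n; lia.
case: (classic (exists n, (N0 <= n)%N /\ S n <> S N0)) => [[n [hn neq]]|]; last first.
  move=> stat; exists N0 => n hn; apply: NNPP => neq; apply: stat; by exists n.
apply: (IH n); have := S_homo _ _ hn; have := S_bd n; lia.
Qed.

Section Sequences.
Variable R : realType.
Implicit Types (u v : nat -> R[i]) (z : R[i]).

Lemma bernoulli_ineq (x : R) n : 0 <= x -> 1 + n%:R * x <= (1 + x) ^+ n.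
Proof.
move=> x0; elim: n => [|n IH]; first by rewrite mul0r addr0 expr0.
rewrite exprS -natr1 mulrDl mul1r.
have h1 : 0 <= 1 + x by rewrite addr_ge0.
have h2 : 0 <= n%:R * x by rewrite mulr_ge0.
nra.
Qed.

Lemma exists_expr_lt (r L : R) : 0 <= r -> r < 1 -> 0 < L -> exists K, r ^+ K < L.
Proof.
move=> r0 r1 L0; have [->|r_neq0] := eqVneq r 0; first by exists 1%N; rewrite expr1.
have r_gt0 : 0 < r by rewrite lt_def r_neq0.
set t := r^-1 - 1; have t_gt0 : 0 < t by rewrite subr_gt0 invf_gt1.
set n := (Num.bound (L * t)^-1).+1; exists n.
have := bernoulli_ineq n (ltW t_gt0).
have -> : 1 + t = r^-1 by rewrite /t addrC subrK.
have n_gt : (L * t)^-1 < n%:R.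
  apply: (lt_trans (archi_boundP _)); first by rewrite invr_ge0 mulr_ge0 // ltW.
  by rewrite ltr_nat.
rewrite -div1r ltr_pdivrMr ?mulr_gt0 // in n_gt.
have A_gt0 : 0 < r^-1 ^+ n by rewrite exprn_gt0 // invr_gt0.
have -> : r ^+ n = 1 / r^-1 ^+ n by rewrite div1r exprVn invrK.
rewrite ltr_pdivrMr //.
have : 0 <= (n%:R : R) by [].
nra.
Qed.

Definition ccvg u z :=
  forall eps : R, 0 < eps -> exists N, forall m, (N <= m)%N -> cabs (u m - z) < eps.

Lemma ccvg_uniq u z z' : ccvg u z -> ccvg u z' -> z = z'.
Proof.
move=> uz uz'; apply/eqP; rewrite -subr_eq0 -cabs_eq0 eq_le cabs_ge0 andbT.
apply/ler_addgt0Pr => e e0; rewrite add0r.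
have e2_gt0 : 0 < e / 2 by rewrite divr_gt0.
have [N hN] := uz _ e2_gt0; have [N' hN'] := uz' _ e2_gt0.
have := cabsD (z - u (N + N')%N) (u (N + N')%N - z'); rewrite addrA subrK.
move/le_trans; apply; rewrite [e]splitr cabs_distC.
by apply: lerD; apply: ltW; [apply: hN | apply: hN']; lia.
Qed.

Lemma ccvg_eventually_eq u v z :
  ccvg u z -> (exists N, forall m, (N <= m)%N -> v m = u m) -> ccvg v z.
Proof.
move=> uz [N0 vu] e e0; have [N hN] := uz e e0; exists (N + N0)%N => m hm.
by rewrite vu; [apply: hN|]; lia.
Qed.

Lemma ccvg_shift u z : ccvg u z -> ccvg (fun m => u m.+1) z.
Proof. by move=> uz e e0; have [N hN] := uz e e0; exists N => m hm; apply: hN; lia. Qed.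

Lemma ccvg_scale u z c : ccvg u z -> ccvg (fun m => c * u m) (c * z).
Proof.
move=> uz e e0; have c1_gt0 : 0 < cabs c + 1 by rewrite ltr_pwDr // cabs_ge0.
have [N hN] := uz _ (divr_gt0 e0 c1_gt0); exists N => m hm.
rewrite -mulrBr cabsM; move: (hN m hm); rewrite ltr_pdivlMr // => /(le_lt_trans _); apply.
by rewrite mulrC ler_wpM2l ?cabs_ge0 // lerDl.
Qed.

Lemma ccvg_const z : ccvg (fun _ => z) z.
Proof. by move=> e e0; exists 0%N => m _; rewrite subrr cabs0. Qed.

Lemma ccvg_cabs_sqr u z : ccvg u z ->
  forall eps : R, 0 < eps -> exists N, forall m, (N <= m)%N -> cabs (u m) ^+ 2 < cabs z ^+ 2 + eps.
Proof.
move=> uz e e0; have z_ge0 := cabs_ge0 z.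
have k_gt0 : 0 < Num.min 1 (e / (2 * cabs z + 2)).
  by rewrite lt_min ltr01 divr_gt0 // ltr_pwDr // mulr_ge0.
have [N hN] := uz _ k_gt0; exists N => m hm.
move: (hN m hm); rewrite lt_min => /andP[d1 de].
rewrite ltr_pdivlMr ?ltr_pwDr ?mulr_ge0 // in de.
have tri : cabs (u m) <= cabs (u m - z) + cabs z by rewrite -[X in cabs X <= _](subrK z) cabsD.
have := cabs_ge0 (u m); have := cabs_ge0 (u m - z).
nra.
Qed.

Lemma qinf_is_ccvg d (q : 'I_d -> 'I_d -> R[i]) g b z :
  qinf_is q g b z -> ccvg (fun m => qfin q (prefix m g) (prefix m b)) z.
Proof. by move=> gbz e e0; have [N hN] := gbz e e0; exists N => m hm; rewrite -ltc_cabs hN. Qed.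

End Sequences.

Section WadjCoefLimit.
Variable R : realType.
Variable d : nat.
Variable q : 'I_d -> 'I_d -> R[i].
Variable r : R.
Hypothesis r_ge0 : 0 <= r.
Hypothesis r_lt1 : r < 1.
Hypothesis q_le : forall i j, i != j -> cabs (q i j) <= r.
Local Notation iw := (iword d).
Implicit Types (j : 'I_d) (b g w : iw).

Lemma cabs_del_coef j w : cabs (del_coef q j w) <= r ^+ first_pos j w.
Proof.
rewrite /del_coef cabs_prod.
have -> : r ^+ first_pos j w = \prod_(k < first_pos j w) r by rewrite prodr_const card_ord.
case: (classic (woccurs j w)) => [jw|jw].
  have [_ before] := first_posP jw.
  by apply: ler_prod => k _; rewrite cabs_ge0 q_le // eq_sym before.
rewrite /first_pos; case: excluded_middle_informative => // _.
by rewrite !big_ord0.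
Qed.

Lemma cabs_wadj_coefS b g n :
  cabs (wadj_coef q b g n.+1) <= cabs (wadj_coef q b g n) * r ^+ wadj_pos q b g n.
Proof.
rewrite /wadj_coef /wadj_pos /=.
case: (wadj_iter q b g n) => [[c w]|]; last by rewrite cabs0 mul0r.
rewrite /wadj; case: excluded_middle_informative => _.
  by rewrite cabsM ler_wpM2l ?cabs_ge0 // cabs_del_coef.
by rewrite cabs0 mulr_ge0 ?cabs_ge0 ?exprn_ge0.
Qed.

Lemma cabs_wadj_coef_le_expr b g n :
  cabs (wadj_coef q b g n) <= r ^+ (\sum_(i < n) wadj_pos q b g i).
Proof.
elim: n => [|n IH]; first by rewrite big_ord0 /wadj_coef /= cabs1 expr0.
apply: (le_trans (cabs_wadj_coefS b g n)); rewrite big_ord_recr /= exprD.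
by rewrite ler_wpM2r ?exprn_ge0.
Qed.

Lemma cabs_wadj_coef_nonincr b g m n : (m <= n)%N ->
  cabs (wadj_coef q b g n) <= cabs (wadj_coef q b g m).
Proof.
apply: (homo_leq (r := fun m n => _ n <= _ m)) => [k|k l o|k]; first exact: lexx.
  by move=> lk ko; apply: le_trans ko lk.
apply: (le_trans (cabs_wadj_coefS b g k)).
by rewrite ler_piMr ?cabs_ge0 // exprn_ile1 // ltW.
Qed.

Lemma cabs_qfin_prefix_le b g m :
  cabs (qfin q (prefix m b) (prefix m g)) <= cabs (wadj_coef q b g m).
Proof. by rewrite qfin_prefix_wadj; case: ifP => _ //; rewrite cabs0 cabs_ge0. Qed.

(* A coefficient bounded away from 0 forces all but finitely many deletions to
   happen at position 0, since each deletion at position p costs a factor r^p. *)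
Lemma wadj_fits_eventually b g L : 0 < L -> (forall n, L <= cabs (wadj_coef q b g n)) ->
  exists N, forall m, (N <= m)%N -> wadj_fits q b g m m.
Proof.
move=> L_gt0 coef_ge; have [K rK] := exists_expr_lt r_ge0 r_lt1 L_gt0.
pose S n := (\sum_(i < n) wadj_pos q b g i)%N.
have SS n : S n.+1 = (S n + wadj_pos q b g n)%N by rewrite /S big_ord_recr.
have S_lt n : (S n < K)%N.
  rewrite ltnNge; apply/negP => KS.
  have := le_trans (coef_ge n) (cabs_wadj_coef_le_expr b g n).
  move/le_trans/(_ (ler_wiXn2l r_ge0 (ltW r_lt1) KS)).
  by rewrite leNgt rK.
have [N0 S_stat] : exists N, forall n, (N <= n)%N -> S n = S N.
  by apply: (@nondecreasing_bounded_stationary S K) => n; [rewrite SS leq_addr | apply: ltnW].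
have pos0 n : (N0 <= n)%N -> wadj_pos q b g n = 0%N.
  by move=> hn; have := S_stat n hn; have := S_stat n.+1 (leqW hn); rewrite SS; lia.
have pos_lt n : (wadj_pos q b g n < K)%N by have := S_lt n.+1; rewrite SS; lia.
exists (N0 + K)%N => m hm; apply/allP => i; rewrite mem_iota add0n => /andP[_ im].
have [iN0|N0i] := ltnP i N0; first by have := pos_lt i; lia.
by rewrite pos0 //; lia.
Qed.

Lemma wadj_coef_ccvg b g z :
  ccvg (fun m => qfin q (prefix m b) (prefix m g)) z -> ccvg (wadj_coef q b g) z.
Proof.
move=> qz.
case: (classic (exists L, 0 < L /\ forall n, L <= cabs (wadj_coef q b g n))).
  move=> [L [L_gt0 coef_ge]]; apply: ccvg_eventually_eq qz _.
  have [N fits] := wadj_fits_eventually L_gt0 coef_ge.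
  by exists N => m /fits; rewrite qfin_prefix_wadj => ->.
move=> not_bounded_below.
have coef0 : ccvg (wadj_coef q b g) 0.
  move=> e e0; apply: NNPP => no_N; apply: not_bounded_below; exists e; split => // n.
  rewrite leNgt; apply/negP => small; apply: no_N; exists n => m nm.
  by rewrite subr0; apply: le_lt_trans (cabs_wadj_coef_nonincr b g nm) small.
suff -> : z = 0 by [].
apply: ccvg_uniq qz _ => e e0; have [N hN] := coef0 e e0; exists N => m hm.
rewrite subr0; apply: le_lt_trans (cabs_qfin_prefix_le b g m) _.
by have := hN m hm; rewrite subr0.
Qed.

End WadjCoefLimit.

Section NullSequences.
Variable R : realType.
Variable H : hilbert R.
Implicit Types (u v : nat -> H).

Definition hnull u := forall eps : R, 0 < eps ->
  exists N, forall m, (N <= m)%N -> hnorm2 (u m) < eps.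

Lemma hnullD u v : hnull u -> hnull v -> hnull (fun m => u m + v m).
Proof.
move=> u0 v0 e e0; have e4_gt0 : 0 < e / 4 by rewrite divr_gt0.
have [N1 hN1] := u0 _ e4_gt0; have [N2 hN2] := v0 _ e4_gt0.
exists (N1 + N2)%N => m hm; apply: (le_lt_trans (hnorm2D_le _ _)).
have := hN1 m (leq_trans (leq_addr _ _) hm); have := hN2 m (leq_trans (leq_addl _ _) hm).
lra.
Qed.

Lemma hnullZ u c : hnull u -> hnull (fun m => c *: u m).
Proof.
move=> u0 e e0; have c_gt0 : 0 < cabs c ^+ 2 + 1 by rewrite ltr_pwDr // exprn_ge0 // cabs_ge0.
have [N hN] := u0 _ (divr_gt0 e0 c_gt0); exists N => m hm; rewrite hnorm2Z.
move: (hN m hm); rewrite ltr_pdivlMr // => /(le_lt_trans _); apply.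
by rewrite mulrC ler_wpM2l ?hnorm2_ge0 // lerDl.
Qed.

Lemma hnull_sum n (f : 'I_n -> nat -> H) : (forall k, hnull (f k)) ->
  hnull (fun m => \sum_(k < n) f k m).
Proof.
elim: n f => [|n IH] f f0.
  by move=> e e0; exists 0%N => m _; rewrite big_ord0 hnorm2_0.
have -> : (fun m => \sum_(k < n.+1) f k m) =
    (fun m => \sum_(k < n) f (widen_ord (leqnSn n) k) m + f ord_max m).
  by apply: functional_extensionality => m; rewrite big_ord_recr.
exact: hnullD (IH (fun k => f (widen_ord (leqnSn n) k)) (fun k => f0 _)) (f0 ord_max).
Qed.

End NullSequences.

Section FockRepresentation.
Variable R : realType.
Variable d : nat.
Variable q : 'I_d -> 'I_d -> R[i].
Hypothesis q_norm : forall i j : 'I_d, i != j -> `|q i j| < 1.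
Variable alpha : iword d.
Variable Q : iword d -> iword d -> R[i].
Hypothesis Q_lim : forall g b : iword d, tail_equiv g alpha -> tail_equiv b alpha ->
  qinf_is q g b (Q g b).
Variable H : hilbert R.
Variable e : iword d -> H.
Hypothesis e_inner : forall g b : iword d, tail_equiv g alpha -> tail_equiv b alpha ->
  hinner (e b) (e g) = Q g b.
Hypothesis e_dense : dense_span (fun b => tail_equiv b alpha) e.
Variables S S' : 'I_d -> H -> H.
Hypothesis S_lin : forall j, hlinear (S j).
Hypothesis S_bd : forall j, hbounded (S j).
Hypothesis S_e : forall j b, tail_equiv b alpha -> S j (e b) = e (shift_in j b).
Hypothesis S'_adj : forall j x y, hinner (S' j x) y = hinner x (S j y).

Local Notation P b := (tail_equiv b alpha).
Implicit Types (j : 'I_d) (b g w : iword d) (x y : H).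

Lemma hnorm2_e b : P b -> hnorm2 (e b) = 1.
Proof.
move=> Pb; apply: complexI; rewrite -hinner_self e_inner //.
apply: ccvg_uniq (qinf_is_ccvg (Q_lim Pb Pb)) _.
by apply: ccvg_eventually_eq (ccvg_const 1) _; exists 0%N => m _; apply: qfin_prefix_diag.
Qed.

Lemma Q_shift_in j g b : P g -> P b ->
  Q (shift_in j g) b = if wadj q j b is Some (c, w) then c * Q g w else 0.
Proof.
move=> Pg Pb; have lim := ccvg_shift (qinf_is_ccvg (Q_lim (tail_equiv_shift_in j Pg) Pb)).
apply: ccvg_uniq lim _; rewrite /wadj; case: excluded_middle_informative => [jb|jb].
  have [bp before] := first_posP jb.
  have Pw := tail_equiv_wdel (first_pos j b) Pb.
  apply: ccvg_eventually_eq (ccvg_scale _ (qinf_is_ccvg (Q_lim Pg Pw))) _.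
  exists (first_pos j b).+1 => m hm; rewrite [prefix m.+1 _]prefixS qfin_cons.
  by rewrite (fock_adj_prefix_first q (conj bp before) (ltnW hm : (_ < m.+1)%N)).
apply: ccvg_eventually_eq (ccvg_const 0) _; exists 0%N => m _.
rewrite [prefix m.+1 _]prefixS qfin_cons fock_adj_prefix_absent // => k _.
by apply/negP => /eqP bk; apply: jb; exists k; rewrite bk.
Qed.

Lemma S'_lin j : hlinear (S' j).
Proof.
move=> a x y; apply/eqP; rewrite -subr_eq0; apply/eqP; apply: hinner_orthogonal_eq0 => z.
by rewrite hinnerBl hinnerDl hinnerZl !S'_adj hinnerDl hinnerZl subrr.
Qed.

Lemma S'_e j b : P b ->
  S' j (e b) = if wadj q j b is Some (c, w) then c *: e w else 0.
Proof.
move=> Pb; apply/eqP; rewrite -subr_eq0; apply/eqP.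
apply: (dense_span_orthogonal_eq0 e_dense) => g Pg.
rewrite hinnerBl S'_adj S_e // (e_inner (tail_equiv_shift_in j Pg) Pb) Q_shift_in //.
rewrite /wadj; case: excluded_middle_informative => _; last by rewrite hinner0l subrr.
by rewrite hinnerZl (e_inner Pg (tail_equiv_wdel _ Pb)) subrr.
Qed.

Lemma S'_e_shift_in j b : P b -> S' j (e (shift_in j b)) = e b.
Proof.
move=> Pb; rewrite (S'_e j (tail_equiv_shift_in j Pb)) /wadj.
have [jb first0] : woccurs j (shift_in j b) /\ first_pos j (shift_in j b) = 0%N.
  by apply: is_first_posE; split.
case: excluded_middle_informative => // _.
rewrite /del_coef first0 big_ord0 scale1r.
by congr e; apply: functional_extensionality => -[|k].
Qed.

Lemma S_bound j : exists C, 0 <= C /\ forall x, hnorm2 (S j x) <= C * hnorm2 x.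
Proof.
have [c Sc] := S_bd j; exists `|c|; split => [|x]; first exact: normr_ge0.
by apply: (le_trans (Sc x)); rewrite ler_wpM2r ?hnorm2_ge0 // ler_norm.
Qed.

Lemma S'_bound j : exists C, 0 <= C /\ forall x, hnorm2 (S' j x) <= C * hnorm2 x.
Proof.
have [C [C0 SC]] := S_bound j; exists C; split => // x.
have := cauchy_schwarz x (S j (S' j x)).
rewrite -S'_adj hinner_self cabs_real ?hnorm2_ge0 //.
have [-> _|nz] := eqVneq (hnorm2 (S' j x)) 0; first by rewrite mulr_ge0 ?hnorm2_ge0.
have n_gt0 : 0 < hnorm2 (S' j x) by rewrite lt_def nz hnorm2_ge0.
move/le_trans/(_ (ler_wpM2l (hnorm2_ge0 x) (SC (S' j x)))).
by rewrite expr2 mulrCA mulrA ler_pM2r // mulrC.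
Qed.

(* s_j^* s_j = I holds on the dense family e_b, and both sides are bounded. *)
Lemma S'S j x : S' j (S j x) = x.
Proof.
have [C [C0 SC]] := S_bound j; have [C' [C'0 S'C]] := S'_bound j.
pose A y := S' j (S j y) - y.
have A_lin : hlinear A.
  by move=> a y z; rewrite /A S_lin S'_lin scalerBr addrACA opprD.
have A_bd y : hnorm2 (A y) <= (2 * (C' * C) + 2) * hnorm2 y.
  apply: (le_trans (hnorm2D_le _ _)); rewrite hnorm2N [X in _ <= X]mulrDl; apply: lerD => //.
  rewrite -mulrA ler_wpM2l //; apply: (le_trans (S'C _)).
  by rewrite -mulrA ler_wpM2l.
have Ae b : P b -> A (e b) = 0 by move=> Pb; rewrite /A S_e // S'_e_shift_in // subrr.
by apply/eqP; rewrite -subr_eq0; apply/eqP; apply: (dense_span_bounded_eq0 e_dense A_lin A_bd Ae).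
Qed.

Definition S_word (s : seq 'I_d) x : H := foldr (fun j y => S j y) x s.
Definition S'_word (s : seq 'I_d) x : H := foldl (fun y j => S' j y) x s.

Lemma S'_word_adj (s : seq 'I_d) : forall x y, hinner (S'_word s x) y = hinner x (S_word s y).
Proof. by elim: s => [|j g IH] x y //=; rewrite IH S'_adj. Qed.

Lemma S_word_adj (s : seq 'I_d) x y : hinner (S_word s x) y = hinner x (S'_word s y).
Proof. by rewrite hinnerC -S'_word_adj -hinnerC. Qed.

Lemma S'_word_S_word (s : seq 'I_d) : forall y, S'_word s (S_word s y) = y.
Proof. by elim: s => [|j g IH] y //=; rewrite S'S IH. Qed.

Lemma S_word_lin (s : seq 'I_d) : hlinear (S_word s).
Proof. by elim: s => [|j g IH] a x y //=; rewrite IH S_lin. Qed.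

Lemma S'_word_lin (s : seq 'I_d) : hlinear (S'_word s).
Proof. by elim: s => [|j g IH] a x y //=; rewrite S'_lin IH. Qed.

Lemma S_word_prefix_wdrop m : forall b, P b -> S_word (prefix m b) (e (wdrop m b)) = e b.
Proof.
elim: m => [|m IH] b Pb.
  by congr e; apply: functional_extensionality.
have Ptb : P (wtail b) by exact: (tail_equiv_wdrop 1 Pb).
by rewrite prefixS /= (IH (wtail b)) // S_e // shift_in_wtail.
Qed.

Lemma S'_word_prefix_self m b : P b -> S'_word (prefix m b) (e b) = e (wdrop m b).
Proof. by move=> Pb; rewrite -{1}(S_word_prefix_wdrop m Pb) S'_word_S_word. Qed.

Lemma S'_word_e b g m : P g ->
  (forall c w, wadj_iter q b g m = Some (c, w) -> P w) /\
  S'_word (prefix m b) (e g) = if wadj_iter q b g m is Some (c, w) then c *: e w else 0.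
Proof.
move=> Pg; elim: m => [|m [IHP IH]]; first by split => [c w [_ <-]|] //=; rewrite scale1r.
rewrite prefix_rcons /S'_word foldl_rcons -/(S'_word _ _) IH /=.
move: IHP; case: (wadj_iter q b g m) => [[c w]|] IHP; last by rewrite hlinear0 //; exact: S'_lin.
have Pw := IHP c w erefl.
rewrite hlinearZ ?S'_e //; last exact: S'_lin.
move: (tail_equiv_wdel (first_pos (b m) w) Pw); rewrite /wadj.
case: excluded_middle_informative => _ Pw'; last by rewrite scaler0.
by split => [c0 w0 [_ <-]|] //; rewrite scalerA.
Qed.

Lemma hnorm2_S'_word_e b g m : P g ->
  hnorm2 (S'_word (prefix m b) (e g)) = cabs (wadj_coef q b g m) ^+ 2.
Proof.
move=> Pg; have [Pw ->] := S'_word_e b m Pg; rewrite /wadj_coef.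
move: Pw; case: (wadj_iter q b g m) => [[c w]|] Pw; last by rewrite hnorm2_0 cabs0 expr0n.
by rewrite hnorm2Z hnorm2_e ?mulr1 //; exact: (Pw c w erefl).
Qed.

Lemma hnorm2_S'_word_le (s : seq 'I_d) x : hnorm2 (S'_word s x) <= hnorm2 x.
Proof.
have := cauchy_schwarz x (S_word s (S'_word s x)).
rewrite -S'_word_adj hinner_self cabs_real ?hnorm2_ge0 //.
have -> : hnorm2 (S_word s (S'_word s x)) = hnorm2 (S'_word s x).
  by apply: complexI; rewrite -!hinner_self S_word_adj S'_word_S_word.
have [-> _|nz] := eqVneq (hnorm2 (S'_word s x)) 0; first exact: hnorm2_ge0.
have n_gt0 : 0 < hnorm2 (S'_word s x) by rewrite lt_def nz hnorm2_ge0.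
by rewrite expr2 ler_pM2r.
Qed.

Definition qmax : R := \big[Order.max/0]_(p : 'I_d * 'I_d | p.1 != p.2) cabs (q p.1 p.2).

Lemma qmax_ge0 : 0 <= qmax.
Proof. by rewrite /qmax; elim/big_rec: _ => // i v _ v0; rewrite le_max v0 orbT. Qed.

Lemma qmax_lt1 : qmax < 1.
Proof.
apply/bigmax_ltP; split => [|[i j] /= ij]; first exact: ltr01.
by rewrite -ltc_cabs q_norm.
Qed.

Lemma cabs_q_le_qmax i j : i != j -> cabs (q i j) <= qmax.
Proof.
by move=> ij; apply: (@le_bigmax_cond _ _ _ _ (i, j) (fun p => p.1 != p.2)
  (fun p : 'I_d * 'I_d => cabs (q p.1 p.2))).
Qed.

Section ProjectionOntoE.
Variable beta : iword d.
Hypothesis Pbeta : P beta.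

(* s_{beta_1...beta_m} s_{beta_1...beta_m}^* is the projection onto the range of
   s_{beta_1...beta_m}; these ranges decrease to the line spanned by e_beta. *)
Definition range_proj m x := S_word (prefix m beta) (S'_word (prefix m beta) x).
Definition orth_e x := x - hinner x (e beta) *: e beta.

Lemma range_proj_lin m : hlinear (range_proj m).
Proof. by move=> a x y; rewrite /range_proj S'_word_lin S_word_lin. Qed.

Lemma orth_e_lin : hlinear orth_e.
Proof.
move=> a x y; rewrite /orth_e hinnerDl hinnerZl scalerDl -scalerA scalerBr.
by rewrite opprD addrACA.
Qed.

Lemma range_proj_e m : range_proj m (e beta) = e beta.
Proof. by rewrite /range_proj S'_word_prefix_self // S_word_prefix_wdrop. Qed.

Lemma range_proj_orth_e m x :
  range_proj m x - hinner x (e beta) *: e beta = range_proj m (orth_e x).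
Proof.
by rewrite /orth_e (hlinearB (range_proj_lin m)) (hlinearZ (range_proj_lin m)) range_proj_e.
Qed.

Lemma hnorm2_range_proj m x : hnorm2 (range_proj m x) = hnorm2 (S'_word (prefix m beta) x).
Proof. by apply: complexI; rewrite -!hinner_self /range_proj S_word_adj S'_word_S_word. Qed.

Lemma hnorm2_orth_e_le x : hnorm2 (orth_e x) <= 4 * hnorm2 x.
Proof.
rewrite /orth_e; apply: (le_trans (hnorm2D_le _ _)).
rewrite hnorm2N hnorm2Z hnorm2_e // mulr1.
have := cauchy_schwarz x (e beta); rewrite hnorm2_e // mulr1.
lra.
Qed.

Lemma range_proj_orth_e_null g : P g -> hnull (fun m => range_proj m (orth_e (e g))).
Proof.
move=> Pg eps e0.
have coef_cvg := wadj_coef_ccvg qmax_ge0 qmax_lt1 cabs_q_le_qmax (qinf_is_ccvg (Q_lim Pbeta Pg)).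
have [N hN] := ccvg_cabs_sqr coef_cvg e0; exists N => m hm.
rewrite hnorm2_range_proj /orth_e (hlinearB (S'_word_lin _)) (hlinearZ (S'_word_lin _)).
set u := S'_word (prefix m beta) (e g); set v := S'_word (prefix m beta) (e beta).
have uv : hinner u v = Q beta g.
  by rewrite /u S'_word_adj -/(range_proj m _) range_proj_e e_inner.
have vv : hinner v v = 1.
  by rewrite /v S'_word_prefix_self // hinner_self (hnorm2_e (tail_equiv_wdrop m Pbeta)).
have uu : hinner u u = (cabs (wadj_coef q beta g m) ^+ 2)%:C.
  by rewrite hinner_self /u hnorm2_S'_word_e.
have gb : hinner (e g) (e beta) = Q beta g by rewrite e_inner.
(* Pythagoras: v is a unit vector and <u, v> = <e_g, e_beta> *)
have -> : hnorm2 (u - hinner (e g) (e beta) *: v) =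
    cabs (wadj_coef q beta g m) ^+ 2 - cabs (Q beta g) ^+ 2.
  apply: complexI; rewrite -hinner_self hinnerBl !hinnerBr !hinnerZl !hinnerZr.
  rewrite uv vv uu (hinnerC v u) uv gb rmorphB /= !cabs_sqr.
  ring.
by have := hN m hm; lra.
Qed.

Lemma range_proj_cvg x : hconverges (fun m => range_proj m x) (hinner x (e beta) *: e beta).
Proof.
move=> eps e0; have e16_gt0 : 0 < eps / 16 by rewrite divr_gt0.
have [k [c [b [Pb hz]]]] := e_dense x e16_gt0.
set z := \sum_(i < k) c i *: e (b i) in hz.
have z_null : hnull (fun m => range_proj m (orth_e z)).
  have := hnull_sum (fun i => hnullZ (c i) (range_proj_orth_e_null (Pb i))).
  congr hnull; apply: functional_extensionality => m.
  rewrite /z (hlinear_sum orth_e_lin) (hlinear_sum (range_proj_lin m)).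
  by apply: eq_bigr => i _; rewrite (hlinearZ orth_e_lin) (hlinearZ (range_proj_lin m)).
have e4_gt0 : 0 < eps / 4 by rewrite divr_gt0.
have [N hN] := z_null _ e4_gt0; exists N => m hm.
rewrite range_proj_orth_e -[x](subrK z) (hlinearD orth_e_lin) (hlinearD (range_proj_lin m)).
apply: (le_lt_trans (hnorm2D_le _ _)).
have : hnorm2 (range_proj m (orth_e (x - z))) <= 4 * hnorm2 (x - z).
  by rewrite hnorm2_range_proj; apply: le_trans (hnorm2_S'_word_le _ _) (hnorm2_orth_e_le _).
have := hN m hm.
lra.
Qed.

End ProjectionOntoE.

Section InvariantSubspace.
Variable M : H -> Prop.
Hypothesis M_closed : closed_subspace M.
Hypothesis M_inv : forall j x, M x -> M (S j x) /\ M (S' j x).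

Lemma invariant_S_word (s : seq 'I_d) x : M x -> M (S_word s x).
Proof. by elim: s => [|j s IH] //= Mx; apply: (proj1 (M_inv _ (IH Mx))). Qed.

Lemma invariant_S'_word (s : seq 'I_d) : forall x, M x -> M (S'_word s x).
Proof. by elim: s => [|j s IH] x //= Mx; apply: IH; exact: (proj2 (M_inv _ Mx)). Qed.

Lemma invariant_e_not_orthogonal x beta : P beta -> M x -> hinner x (e beta) != 0 -> M (e beta).
Proof.
move=> Pbeta Mx xb; case: (M_closed) => M0 M_lin M_lim.
have Mproj : M (hinner x (e beta) *: e beta).
  apply: M_lim (range_proj_cvg Pbeta x) => m.
  exact/invariant_S_word/invariant_S'_word.
by have := M_lin (hinner x (e beta))^-1 _ _ Mproj M0; rewrite addr0 scalerA mulVf ?scale1r.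
Qed.

(* e_g and e_beta are related through their common tail e_{sigma^m g} = e_{sigma^n beta}. *)
Lemma invariant_e_tail_equiv beta g : P beta -> P g -> M (e beta) -> M (e g).
Proof.
move=> Pbeta Pg Mbeta; case: (Pg) => m1 [n1 g_alpha]; case: (Pbeta) => m2 [n2 beta_alpha].
have common : wdrop (m1 + n2) g = wdrop (m2 + n1) beta.
  apply: functional_extensionality => i; rewrite /wdrop.
  have -> : (m1 + n2 + i = (n2 + i) + m1)%N by lia.
  have -> : (m2 + n1 + i = (n1 + i) + m2)%N by lia.
  by rewrite g_alpha beta_alpha; congr alpha; lia.
rewrite -(S_word_prefix_wdrop (m1 + n2) Pg) common -(S'_word_prefix_self _ Pbeta).
exact/invariant_S_word/invariant_S'_word.
Qed.

Lemma invariant_subspace_trivial : (forall x, M x -> x = 0) \/ (forall x, M x).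
Proof.
case: (classic (exists x, M x /\ x != 0)) => [[x [Mx x_neq0]]|no_x]; last first.
  by left => x Mx; apply/eqP; apply: contra_notT no_x => x_neq0; exists x.
right; have [beta [Pbeta xb]] : exists beta, P beta /\ hinner x (e beta) != 0.
  apply: NNPP => no_beta; move/negP: x_neq0; apply; apply/eqP.
  apply: (dense_span_orthogonal_eq0 e_dense) => b Pb; apply/eqP.
  by apply: contraT => xb; case: no_beta; exists b.
apply: (dense_span_closed_subspace_full e_dense M_closed) => g Pg.
exact: invariant_e_tail_equiv Pbeta Pg (invariant_e_not_orthogonal Pbeta Mx xb).
Qed.

End InvariantSubspace.

End FockRepresentation.

Theorem mainTheorem4
  (R : realType) (d : nat) (hd : (2 <= d)%N)
  (q : 'I_d -> 'I_d -> R[i])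
  (hq_norm : forall i j : 'I_d, i != j -> `|q i j| < 1)
  (hq_conj : forall i j : 'I_d, i != j -> q i j = (q j i)^*)
  (alpha : iword d)
  (Q : iword d -> iword d -> R[i])
  (hQ : forall g b : iword d, tail_equiv g alpha -> tail_equiv b alpha ->
          qinf_is q g b (Q g b))
  (H : hilbert R) (e : iword d -> H)
  (he_inner : forall g b : iword d, tail_equiv g alpha -> tail_equiv b alpha ->
          hinner (e b) (e g) = Q g b)
  (he_dense : dense_span (fun b => tail_equiv b alpha) e)
  (S S' : 'I_d -> H -> H)
  (hS_lin : forall j, hlinear (S j)) (hS_bd : forall j, hbounded (S j))
  (hS_e : forall j (b : iword d), tail_equiv b alpha -> S j (e b) = e (shift_in j b))
  (hS'_adj : forall j (x y : H), hinner (S' j x) y = hinner x (S j y)) :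
  forall M : H -> Prop, closed_subspace M ->
    (forall j (x : H), M x -> M (S j x) /\ M (S' j x)) ->
    (forall x : H, M x -> x = 0) \/ (forall x : H, M x).
Proof.
(* [hd] and [hq_conj] only matter for the existence of pi_alpha, which is assumed here. *)
move=> M M_closed M_inv.
exact: (invariant_subspace_trivial hq_norm hQ he_inner he_dense hS_lin hS_bd hS_e hS'_adj
  M_closed M_inv).
Qed.
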